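(* Let $S$ be a finite generating subset of a group $G$ with $1\in S$, such that $S$ is $k$-separable. Let $H$ be a $k$-atom of $S$ with $1\in H$. Assume that either $G$ is infinite or $\alpha_k(S)\le\alpha_{-k}(S)$. If $|\Pi^r(H)|\ge k$, then $H$ is a subgroup of $G$.
   Context: For a group $G$ and $S\subseteq G$, the Cayley graph $\mathrm{Cay}(G,S)$ has vertex set $G$ and arcs $(x,y)$ with $x^{-1}y\in S$; so the image of $X\subseteq G$ is $XS$. For a graph $\Gamma=(V,E)$ (reflexive, locally finite), $\partial(X)=\Gamma(X)\setminus X$; $\Gamma$ is $k$-separable if some finite $X$ has $|X|\ge k$ and $|V\setminus\Gamma(X)|\ge k$; then $\kappa_k(\Gamma)=\min\{|\partial(X)|: X\text{ finite},|X|\ge k,|V\setminus\Gamma(X)|\ge k\}$, a $k$-fragment is such an $X$ attaining the minimum, a $k$-atom is a $k$-fragment of minimum cardinality, $\alpha_k(\Gamma)$ its cardinality. For $S$ with $1\in S$, $k$-fragments, $k$-atoms, $\kappa_k(S)$, $\alpha_k(S)$ refer to $\mathrm{Cay}(\langle S\rangle,S)$ ($\langle S\rangle$ the generated subgroup), $S$ is $k$-separable if this graph is, and $\alpha_{-k}(S)=\alpha_k(\mathrm{Cay}(\langle S\rangle,S^{-1}))$. $\Pi^r(X)=\{x\in G: Xx=X\}$. *)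

(* Groups are possibly infinite: we use the (not necessarily
   finite) [groupType] structure of mathcomp/boot/monoid.v.  Finite subsets
   of the group are represented by sequences (duplicates allowed; the
   cardinality of the represented set is [card X = size (undup X)]). *)
From HB Require Import structures.
From mathcomp Require Import all_boot.
Set Implicit Arguments. Unset Strict Implicit. Unset Printing Implicit Defensive.

Local Open Scope group_scope.

Section CayleyConnectivity.
Variable G : groupType.

Definition card (X : seq G) : nat := size (undup X).

Definition has_atleast (k : nat) (P : G -> Prop) : Prop :=
  exists s : seq G, [/\ uniq s, k <= size s & forall x, x \in s -> P x].

Definition finite_group : Prop := exists s : seq G, forall g : G, g \in s.

(* image of X in Cay(G,S): Gamma(X) = XS *)
Definition img (X S : seq G) : seq G := [seq x * s | x <- X, s <- S].

Definition bnd (X S : seq G) : seq G := [seq y <- img X S | y \notin X].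

(* X finite, |X| >= k and |V \ Gamma(X)| >= k   (here V = G = <S>) *)
Definition admissible (S : seq G) (k : nat) (X : seq G) : Prop :=
  k <= card X /\ has_atleast k (fun y => y \notin img X S).

Definition k_separable (S : seq G) (k : nat) : Prop :=
  exists X, admissible S k X.

Definition fragment (S : seq G) (k : nat) (X : seq G) : Prop :=
  admissible S k X /\
  forall Y, admissible S k Y -> card (bnd X S) <= card (bnd Y S).

Definition atom (S : seq G) (k : nat) (X : seq G) : Prop :=
  fragment S k X /\ forall Y, fragment S k Y -> card X <= card Y.

Definition invs (S : seq G) : seq G := [seq s^-1 | s <- S].

(* alpha_k(S) <= alpha_{-k}(S) = alpha_k(Cay(<S>, S^{-1})):
   every k-atom of S has at most the size of every k-atom of S^{-1}
   (atoms all have the same size alpha) *)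
Definition alpha_le (S : seq G) (k : nat) : Prop :=
  forall A B, atom S k A -> atom (invs S) k B -> card A <= card B.

Inductive generated (S : seq G) : G -> Prop :=
  | gen_one : generated S 1
  | gen_mul s x : s \in S -> generated S x -> generated S (x * s)
  | gen_inv s x : s \in S -> generated S x -> generated S (x * s^-1).

Definition generates (S : seq G) : Prop := forall g : G, generated S g.

Definition in_Pi_r (H : seq G) (x : G) : Prop :=
  forall y : G, y \in H <-> exists2 h, h \in H & y = h * x.

End CayleyConnectivity.

(* For h ∈ H the
   translate B = h^-1 H is again a k-fragment (left translations are graph
   automorphisms) and H ∩ B contains Π^r(H), hence has at least k elements.
   If H ∪ B is admissible, submodularity of the boundary,
   |∂(H ∪ B)| + |∂(H ∩ B)| <= |∂H| + |∂B|, makes H ∩ B a k-fragment, and the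
   minimality of the atom H forces H = H ∩ B = B, i.e. hH = H.  Admissibility
   of H ∪ B is free in an infinite group; in a finite group it follows from
   |V \ Γ(H)| >= |H|, which we derive from α_k(S) <= α_{-k}(S) by showing that
   V \ Γ(H) is a k-fragment of S^-1 (duality between S and S^-1). *)

From Pilot Require Import Defs.
From Stdlib Require Import Lia Classical.
From mathcomp Require Import all_boot zify.
Set Implicit Arguments. Unset Strict Implicit. Unset Printing Implicit Defensive.

Local Open Scope group_scope.

Local Notation card := Defs.card.

Section Cardinality.
Variable G : groupType.
Implicit Types (X Y A B u : seq G).

Lemma card_count X u : uniq u -> {subset X <= u} -> card X = count (mem X) u.
Proof.
move=> Uu sub; rewrite /Defs.card -size_filter; apply: perm_size.
apply: uniq_perm; [exact: undup_uniq | exact: filter_uniq |].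
move=> x; rewrite mem_undup mem_filter /=.
by case Hx: (x \in X) => //=; rewrite sub.
Qed.

Lemma card_ge_uniq s X : uniq s -> {subset s <= X} -> size s <= card X.
Proof. by move=> Us sub; apply: uniq_leq_size => // x /sub; rewrite mem_undup. Qed.

Lemma card_sub X Y : {subset X <= Y} -> card X <= card Y.
Proof.
move=> sub; apply: card_ge_uniq; first exact: undup_uniq.
by move=> x; rewrite mem_undup => /sub.
Qed.

Lemma card_sub_eq X Y : {subset X <= Y} -> card Y <= card X -> X =i Y.
Proof.
move=> sub le_YX x.
have sub' : {subset undup X <= undup Y} by move=> y; rewrite !mem_undup => /sub.
have [_ eqXY] := uniq_min_size (undup_uniq X) sub' le_YX.
by rewrite -mem_undup eqXY mem_undup.
Qed.

Lemma card_eq X Y : X =i Y -> card X = card Y.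
Proof. by move=> eqXY; apply/eqP; rewrite eqn_leq !card_sub // => x; rewrite eqXY. Qed.

Lemma card_diff X Y : {subset X <= Y} ->
  card [seq y <- Y | y \notin X] + card X = card Y.
Proof.
move=> sub; set u := undup Y; have Uu : uniq u := undup_uniq Y.
rewrite (card_count Uu) => [|y]; last by rewrite mem_filter mem_undup => /andP[].
rewrite (card_count Uu) => [|y /sub]; last by rewrite mem_undup.
rewrite -[card Y]/(size u) -(count_predC (mem X)) addnC; congr (_ + _).
by apply: eq_in_count => y; rewrite mem_undup /= mem_filter => ->; rewrite andbT.
Qed.

Definition inter A B := [seq x <- A | x \in B].

Lemma mem_inter A B x : (x \in inter A B) = (x \in A) && (x \in B).
Proof. by rewrite mem_filter andbC. Qed.

Lemma card_union A B : card (A ++ B) + card (inter A B) = card A + card B.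
Proof.
set u := undup (A ++ B); have Uu : uniq u := undup_uniq _.
have subA : {subset A <= u} by move=> x Ax; rewrite mem_undup mem_cat Ax.
have subB : {subset B <= u} by move=> x Bx; rewrite mem_undup mem_cat Bx orbT.
rewrite [card (A ++ B)]/Defs.card -/u -(count_predT u) (card_count Uu subA).
rewrite (card_count Uu subB) (card_count Uu) => [|x]; last by rewrite mem_inter => /andP[/subA].
rewrite -[count (mem A) u + _]count_predUI; congr (_ + _).
  by apply: eq_in_count => x /=; rewrite mem_undup mem_cat => ->.
by apply: eq_count => x /=; rewrite mem_inter.
Qed.

End Cardinality.

Section CayleyGraph.
Variables (G : groupType) (S : seq G).
Implicit Types (X Y A B : seq G) (x y g : G).

Lemma imgP X y :
  reflect (exists x s, [/\ x \in X, s \in S & y = x * s]) (y \in img X S).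
Proof.
apply: (iffP allpairsP) => [[[x s] /= [Xx Ss ->]]|[x [s [Xx Ss ->]]]].
  by exists x, s.
by exists (x, s).
Qed.

Lemma mem_img X x s : x \in X -> s \in S -> x * s \in img X S.
Proof. by move=> Xx Ss; apply/imgP; exists x, s. Qed.

Lemma img_sub X Y : {subset X <= Y} -> {subset img X S <= img Y S}.
Proof. by move=> sub y /imgP [x [s [/sub Yx Ss ->]]]; rewrite mem_img. Qed.

Lemma img_cat A B : img (A ++ B) S =i img A S ++ img B S.
Proof.
move=> y; rewrite mem_cat; apply/idP/orP => [/imgP [x [s [ABx Ss ->]]]|].
  by move: ABx; rewrite mem_cat => /orP[] ?; [left|right]; rewrite mem_img.
by case=> /img_sub; apply=> x; rewrite mem_cat => ->; rewrite ?orbT.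
Qed.

Lemma img_inter A B : {subset img (inter A B) S <= inter (img A S) (img B S)}.
Proof.
move=> y Iy; rewrite mem_inter.
by apply/andP; split; apply: img_sub Iy => x; rewrite mem_inter => /andP[].
Qed.

(* Left translation X |-> gX, an automorphism of the Cayley graph. *)
Definition tr g X := [seq g * x | x <- X].

Lemma mem_tr g X y : (y \in tr g X) = (g^-1 * y \in X).
Proof.
apply/mapP/idP => [[x Xx ->]|Xy]; first by rewrite mulKg.
by exists (g^-1 * y) => //; rewrite mulVKg.
Qed.

Lemma card_tr g X : card (tr g X) = card X.
Proof. by rewrite /Defs.card /tr undup_map_inj ?size_map //; exact: mulgI. Qed.

Lemma img_tr g X : img (tr g X) S =i tr g (img X S).
Proof.
move=> y; rewrite mem_tr; apply/imgP/imgP => [[x [s [Xx Ss ->]]]|[x [s [Xx Ss E]]]].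
  by exists (g^-1 * x), s; rewrite -mem_tr mulgA.
by exists (g * x), s; rewrite mem_tr mulKg -mulgA -E mulVKg.
Qed.

Lemma card_bnd_tr g X : card (bnd (tr g X) S) = card (bnd X S).
Proof.
rewrite -(card_tr g (bnd X S)); apply: card_eq => y.
by rewrite mem_tr !mem_filter img_tr !mem_tr.
Qed.

Lemma admissible_tr k g X : admissible S k X -> admissible S k (tr g X).
Proof.
move=> [kX [w [Uw kw outw]]]; split; first by rewrite card_tr.
exists (tr g w); split; first by rewrite map_inj_uniq //; exact: mulgI.
  by rewrite size_map.
by move=> y; rewrite mem_tr img_tr mem_tr => /outw.
Qed.

Lemma fragment_tr k g X : fragment S k X -> fragment S k (tr g X).
Proof.
by move=> [admX minX]; split=> [|Y /minX]; [exact: admissible_tr | rewrite card_bnd_tr].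
Qed.

Hypothesis S1 : 1 \in S.

(* Since 1 ∈ S the graph is reflexive: X ⊆ Γ(X), so |Γ(X)| = |X| + |∂X|. *)
Lemma img_self X : {subset X <= img X S}.
Proof. by move=> x Xx; rewrite -[x]mulg1 mem_img. Qed.

Lemma card_img X : card (bnd X S) + card X = card (img X S).
Proof. exact/card_diff/img_self. Qed.

Lemma bnd_submodular A B :
  card (bnd (A ++ B) S) + card (bnd (inter A B) S) <= card (bnd A S) + card (bnd B S).
Proof.
have eU : card (img (A ++ B) S) = card (img A S ++ img B S) := card_eq (img_cat A B).
have lI := card_sub (@img_inter A B).
have := card_union A B; have := card_union (img A S) (img B S).
rewrite -!card_img in eU lI *; lia.
Qed.

End CayleyGraph.

Lemma infinite_atleast (G : groupType) (X : seq G) n :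
  ~ finite_group G -> has_atleast n (fun y => y \notin X).
Proof.
move=> infG; elim: n => [|n [w [Uw nw outw]]]; first by exists [::].
have [g gout] : exists g, g \notin w ++ X.
  apply: NNPP => all_in; apply: infG; exists (w ++ X) => g.
  by case: (boolP (g \in w ++ X)) => // gout; case: all_in; exists g.
rewrite mem_cat negb_or in gout; case/andP: gout => gw gX.
exists (g :: w); split => //=; first by rewrite gw.
by move=> x; rewrite inE => /orP[/eqP ->|/outw].
Qed.

Definition coimg (G : groupType) (S u X : seq G) : seq G :=
  [seq g <- u | g \notin img X S].

Section Duality.
Variables (G : groupType) (u : seq G).
Hypothesis u_total : forall g : G, g \in u.
Implicit Types (S X Y : seq G).

Lemma invsK S : invs (invs S) = S.
Proof. by rewrite /invs -map_comp (@eq_map _ _ _ id) ?map_id // => x /=; rewrite invgK. Qed.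

Lemma bnd_coimg S X : {subset bnd (coimg S u X) (invs S) <= bnd X S}.
Proof.
move=> y; rewrite !mem_filter u_total andbT negbK.
case/andP=> Iy /imgP [z [t [Cz /mapP [s Ss ->] Ey]]]; rewrite Iy andbT.
apply: contraL Cz => Xy; rewrite mem_filter negb_and negbK.
by rewrite -(mulgVK s z) -Ey mem_img.
Qed.

(* V \ Γ(X) is admissible for S^-1: it has at least k elements and X lies
   outside its image in Cay(G, S^-1). *)
Lemma coimg_admissible S k X : admissible S k X -> admissible (invs S) k (coimg S u X).
Proof.
move=> [kX [w [Uw kw outw]]]; split.
  by apply: leq_trans kw (card_ge_uniq Uw _) => x xw; rewrite mem_filter outw ?u_total.
exists (undup X); split; [exact: undup_uniq | done |].
move=> x; rewrite mem_undup => Xx; apply/imgP => [[z [t [Cz /mapP [s Ss ->] E]]]].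
move: Cz; rewrite mem_filter => /andP[/negP []].
by rewrite (_ : z = x * s) ?mem_img // E mulgVK.
Qed.

(* Hence κ_{-k} <= κ_k, and by symmetry V \ Γ(X) is a k-fragment of S^-1
   whenever X is a k-fragment of S. *)
Lemma coimg_fragment S k X : fragment S k X -> fragment (invs S) k (coimg S u X).
Proof.
move=> [admX minX]; split; first exact: coimg_admissible.
move=> Y /coimg_admissible; rewrite invsK => /minX le_XY.
apply: leq_trans (card_sub (@bnd_coimg S X)) (leq_trans le_XY _).
by have := card_sub (@bnd_coimg (invs S) Y); rewrite invsK.
Qed.

Lemma card_coimg S X : 1 \in S ->
  card (coimg S u X) + card (bnd X S) + card X = card u.
Proof.
by move=> S1; rewrite -addnA card_img // card_diff // => y _; exact: u_total.
Qed.

End Duality.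

Lemma atom_below (G : groupType) (S Y : seq G) k :
  fragment S k Y -> exists2 B, atom S k B & card B <= card Y.
Proof.
move Hn: (card Y) => n; elim/ltn_ind: n Y Hn => n IH Y eqYn fragY; subst n.
case: (classic (forall Z, fragment S k Z -> card Y <= card Z)) => [minY|].
  by exists Y.
move=> /not_all_ex_not [Z notZ]; have [fragZ notle] := imply_to_and _ _ notZ.
have ltZY : card Z < card Y by rewrite ltnNge; apply/negP.
have [B atomB leBZ] := IH _ ltZY Z erefl fragZ.
by exists B => //; exact: leq_trans leBZ (ltnW ltZY).
Qed.

Section Atoms.
Variables (G : groupType) (S : seq G) (k : nat).
Implicit Types (X Y A B : seq G).

Lemma admissible_inter A B : admissible S k A -> k <= card (inter A B) ->
  admissible S k (inter A B).
Proof.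
move=> [_ [w [Uw kw outw]]] kI; split => //; exists w; split => // y /outw.
by apply: contra; apply: img_sub => x; rewrite mem_inter => /andP[].
Qed.

Hypothesis S1 : 1 \in S.

Lemma fragment_inter A B : fragment S k A -> fragment S k B ->
  admissible S k (A ++ B) -> admissible S k (inter A B) -> fragment S k (inter A B).
Proof.
move=> [_ minA] [admB minB] /minB leBU admI; split => // Y /minA leAY.
have := bnd_submodular S1 A B; lia.
Qed.

Lemma atom_le_coimg u H : (forall g, g \in u) -> alpha_le S k -> atom S k H ->
  card H <= card (coimg S u H).
Proof.
move=> u_total alphaS atomH.
have [B atomB leB] := atom_below (coimg_fragment u_total atomH.1).
exact: leq_trans (alphaS _ _ atomH atomB) leB.
Qed.

(* A ∪ B is admissible when A is a k-atom, B a k-fragment no larger than A and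
   A ∩ B admissible: trivially in an infinite group, and in a finite one because
   |V \ Γ(A ∪ B)| >= |V \ Γ(A)| - |A| + |A ∩ B| >= |A ∩ B| >= k. *)
Lemma union_admissible A B : (~ finite_group G \/ alpha_le S k) ->
  atom S k A -> fragment S k B -> card B <= card A -> admissible S k (inter A B) ->
  admissible S k (A ++ B).
Proof.
move=> infG_or_alpha atomA fragB leBA admI; split.
  by apply: leq_trans atomA.1.1.1 (card_sub _) => x; rewrite mem_cat => ->.
case: (classic (finite_group G)) => [[s s_total]|infG]; last exact: infinite_atleast.
have alphaS : alpha_le S k.
  by case: infG_or_alpha => // infG; case: infG; exists s.
set u := undup s; have u_total : forall g, g \in u by move=> g; rewrite mem_undup.
have uniqC : uniq (coimg S u (A ++ B)) := filter_uniq _ (undup_uniq s).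
exists (coimg S u (A ++ B)); split => //; last by move=> y; rewrite mem_filter => /andP[].
have := atom_le_coimg u_total alphaS atomA.
have := card_coimg u_total A S1; have := card_coimg u_total (A ++ B) S1.
have := bnd_submodular S1 A B; have := card_union A B.
have := atomA.1.2 _ admI; have := fragB.2 _ atomA.1.1; have := admI.1.
have -> : size (coimg S u (A ++ B)) = card (coimg S u (A ++ B)).
  by rewrite /Defs.card (undup_id uniqC).
lia.
Qed.

(* The translate B = h^-1 H is a k-fragment
   of the size of H, and H ∩ B contains Π^r(H), so H ∩ B is admissible, then a
   k-fragment by the intersection property; minimality of the atom H forces
   H = H ∩ B = B. *)
Lemma atom_left_stable H h : (~ finite_group G \/ alpha_le S k) ->
  atom S k H -> 1 \in H -> has_atleast k (in_Pi_r H) -> h \in H ->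
  forall z, (h * z \in H) = (z \in H).
Proof.
move=> infG_or_alpha atomH H1 [w [Uw kw Piw]] Hh z.
set B := tr h^-1 H.
have fragB : fragment S k B := fragment_tr h^-1 atomH.1.
have cardB : card B = card H := card_tr h^-1 H.
have PiI : {subset w <= inter H B}.
  move=> x /Piw Pix; rewrite mem_inter mem_tr invgK.
  by apply/andP; split; apply/(Pix _).2; [exists 1; rewrite ?mul1g | exists h].
have admI : admissible S k (inter H B).
  exact: admissible_inter atomH.1.1 (leq_trans kw (card_ge_uniq Uw PiI)).
have admU := union_admissible infG_or_alpha atomH fragB (eq_leq cardB) admI.
have leHI : card H <= card (inter H B).
  exact: atomH.2 _ (fragment_inter atomH.1 fragB admU admI).
have IeqH : inter H B =i H.
  by apply: card_sub_eq leHI => x; rewrite mem_inter => /andP[].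
have IB : inter H B =i B.
  by apply: card_sub_eq; [move=> x; rewrite mem_inter => /andP[] | rewrite cardB].
by have := mem_tr h^-1 H z; rewrite invgK => <-; rewrite -IB IeqH.
Qed.

End Atoms.

Theorem mainTheorem6 (G : groupType) (S H : seq G) (k : nat) :
  1 \in S -> generates S -> k_separable S k ->
  atom S k H -> 1 \in H ->
  (~ finite_group G \/ alpha_le S k) ->
  has_atleast k (in_Pi_r H) ->
  group_closed (mem H).
Proof.
move=> S1 _ _ atomH H1 infG_or_alpha PiH; split => // x y Hx Hy.
have stable := atom_left_stable S1 infG_or_alpha atomH H1 PiH.
have Hy' : y^-1 \in H by rewrite -(stable y Hy) mulgV.
by rewrite (stable x Hx).
Qed.
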